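(* Let $a>0$, $\alpha\in[0,1)$ and $f\in\mathcal C_a$. Then $s_\alpha=(1-\alpha)^{-1}F_\alpha(x_\alpha^+)<a$.
   Context: $\mathcal C_a$ is the set of $C^1$ functions $f:\mathbb R\to\mathbb R$ that are even, satisfy $f(s)=|s|$ for $|s|\ge a$ and are strictly convex on $[-a,a]$. For $f\in\mathcal C_a$: $F_\alpha(s)=f(s)-\alpha s$, $x_\alpha^+=(f')^{-1}(\alpha)\in[0,a)$ (inverse of $f':[-a,a]\to[-1,1]$); $F_\alpha$ decreases on $(-\infty,x_\alpha^+]$ and increases on $[x_\alpha^+,\infty)$. Let $F_\alpha^{-1}$ be the inverse of $F_\alpha|_{[x_\alpha^+,\infty)}$, $\phi=F_\alpha^{-1}\circ F_\alpha$, $\delta_x=(1-\alpha)^{-1}F_\alpha(x)-\phi(x)$ and $s_\alpha=x_\alpha^++\delta_{x_\alpha^+}$. *)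

From Stdlib Require Import Reals Lra ClassicalEpsilon.
From Coquelicot Require Import Coquelicot.
Open Scope R_scope.

Definition in_Ca (a : R) (f : R -> R) : Prop :=
  (forall x, ex_derive f x) /\
  (forall x, continuous (Derive f) x) /\
  (forall s, f (- s) = f s) /\
  (forall s, a <= Rabs s -> f s = Rabs s) /\
  (forall x y t, -a <= x <= a -> -a <= y <= a -> x <> y -> 0 < t < 1 ->
     f (t * x + (1 - t) * y) < t * f x + (1 - t) * f y).

Definition Falpha (f : R -> R) (alpha : R) (s : R) : R := f s - alpha * s.

(* x_alpha^+ = (f')^{-1}(alpha), the inverse of f' : [-a,a] -> [-1,1]
   (chosen by Hilbert's epsilon; it is unique for f in C_a). *)
Definition xplus (a : R) (f : R -> R) (alpha : R) : R :=
  epsilon (inhabits 0) (fun x => -a <= x <= a /\ Derive f x = alpha).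

Definition Finv (a : R) (f : R -> R) (alpha : R) (y : R) : R :=
  epsilon (inhabits 0)
    (fun z => xplus a f alpha <= z /\ Falpha f alpha z = y).

Definition phi (a : R) (f : R -> R) (alpha : R) (x : R) : R :=
  Finv a f alpha (Falpha f alpha x).

Definition delta (a : R) (f : R -> R) (alpha : R) (x : R) : R :=
  / (1 - alpha) * Falpha f alpha x - phi a f alpha x.

Definition salpha (a : R) (f : R -> R) (alpha : R) : R :=
  xplus a f alpha + delta a f alpha (xplus a f alpha).

From Stdlib Require Import Reals Lra ClassicalEpsilon.
From Coquelicot Require Import Coquelicot.
Open Scope R_scope.

(* Since [f = |.|] outside [(-a, a)], the derivative runs from [-1] at [-a] to [1] at [a],
   so by continuity of [f'] some [x+] in [[-a, a]] has [f'(x+) = alpha], and [x+ <> a] as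
   [alpha < 1].  Strict convexity puts [f] strictly above its tangent at [x+], hence [F_alpha]
   has a strict minimum at [x+] on [[x+, a]]; beyond [a], [F_alpha s = (1 - alpha) s] keeps
   increasing.  So [x+] is the only preimage of [F_alpha(x+)] in [[x+, oo)], i.e.
   [phi(x+) = x+], and [s_alpha = F_alpha(x+) / (1 - alpha) < F_alpha(a) / (1 - alpha) = a]. *)

Lemma is_derive_gt_right (g : R -> R) (x l d : R) :
  is_derive g x l -> 0 < l -> 0 < d ->
  exists h, 0 < h < d /\ g x < g (x + h).
Proof.
  intros Dg Hl Hd.
  destruct (proj1 (is_derive_Reals g x l) Dg l Hl) as [[del Hdel] Hquot]; simpl in Hquot.
  set (h := Rmin d del / 2).
  assert (Hh : 0 < h < d).
  { pose proof (Rmin_l d del); pose proof (Rmin_glb_lt d del 0 Hd Hdel); unfold h; lra. }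
  assert (Hh_del : Rabs h < del).
  { rewrite Rabs_pos_eq by lra; pose proof (Rmin_r d del); unfold h; lra. }
  specialize (Hquot h ltac:(lra) Hh_del).
  exists h; split; [exact Hh |].
  set (q := (g (x + h) - g x) / h) in Hquot.
  assert (Hq : 0 < q).
  { rewrite Rabs_minus_sym in Hquot; pose proof (Rle_abs (l - q)); lra. }
  assert (Hincr : g (x + h) - g x = q * h) by (unfold q; field; lra).
  nra.
Qed.

Lemma is_derive_const_right (g : R -> R) (x l : R) :
  is_derive g x l -> (forall h, 0 < h -> g (x + h) = g x) -> l = 0.
Proof.
  intros Dg Hconst.
  destruct (Rtotal_order l 0) as [Hl | [Hl | Hl]]; [| exact Hl |].
  - destruct (is_derive_gt_right (fun s => - g s) x (- l) 1) as [h [Hh Hlt]];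
      [exact (is_derive_opp g x l Dg) | lra | lra |].
    rewrite Hconst in Hlt by lra; lra.
  - destruct (is_derive_gt_right g x l 1 Dg Hl ltac:(lra)) as [h [Hh Hlt]].
    rewrite Hconst in Hlt by lra; lra.
Qed.

Lemma Derive_even (f : R -> R) (x : R) :
  (forall s, f (- s) = f s) -> ex_derive f (- x) -> Derive f x = - Derive f (- x).
Proof.
  intros Hev Dfx.
  rewrite <- (Derive_ext (fun s => f (- s)) f x Hev).
  rewrite Derive_comp by (auto_derive; auto || exact I).
  rewrite (is_derive_unique Ropp x (-1)) by (auto_derive; auto; ring).
  ring.
Qed.

(* Otherwise [t |-> f (x + t (z - x)) - t (f z - f x)] would have positive derivative at [0]
   and so exceed its value [f x] at some [t] in [(0, 1)], against convexity. *)
Lemma convex_tangent_le (f : R -> R) (x z l : R) :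
  is_derive f x l ->
  (forall t, 0 < t < 1 -> f (t * z + (1 - t) * x) <= t * f z + (1 - t) * f x) ->
  f x + l * (z - x) <= f z.
Proof.
  intros Df Hconv.
  apply Rnot_lt_le; intro Hlt.
  set (g := fun t => f (x + t * (z - x)) - t * (f z - f x)).
  assert (Dg : is_derive g 0 (l * (z - x) - (f z - f x))).
  { replace x with (x + 0 * (z - x)) in Df at 1 by ring.
    unfold g; auto_derive.
    - exists l; exact Df.
    - change (Derive (fun s => f s)) with (Derive f).
      rewrite (is_derive_unique _ _ _ Df); ring. }
  destruct (is_derive_gt_right g 0 _ 1 Dg ltac:(lra) ltac:(lra)) as [t [Ht Hgt]].
  specialize (Hconv t Ht).
  unfold g in Hgt; rewrite Rplus_0_l, Rmult_0_l, Rplus_0_r in Hgt.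
  replace (t * z + (1 - t) * x) with (x + t * (z - x)) in Hconv by ring.
  lra.
Qed.

Section ClassCa.

Variables (a : R) (f : R -> R).
Hypotheses (Ha : 0 < a) (Hf : in_Ca a f).

Lemma Ca_is_derive (x : R) : is_derive f x (Derive f x).
Proof. apply Derive_correct, Hf. Qed.

Lemma Ca_eq_id (s : R) : a <= s -> f s = s.
Proof.
  intro Hs; destruct Hf as [_ [_ [_ [Habs _]]]].
  rewrite Habs; rewrite Rabs_pos_eq; lra.
Qed.

Lemma Ca_Derive_a : Derive f a = 1.
Proof.
  enough (Derive f a - 1 = 0) by lra.
  apply (is_derive_const_right (fun s => f s - s) a).
  - auto_derive; [apply Hf | change (Derive (fun s => f s)) with (Derive f); ring].
  - intros h Hh; rewrite !Ca_eq_id by lra; ring.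
Qed.

Lemma Ca_Derive_opp_a : Derive f (- a) = -1.
Proof.
  destruct Hf as [Dfx [_ [Hev _]]].
  rewrite (Derive_even f (- a) Hev), Ropp_involutive by (apply Dfx).
  rewrite Ca_Derive_a; ring.
Qed.

Lemma Ca_Derive_surj (alpha : R) :
  -1 <= alpha <= 1 -> exists x, -a <= x <= a /\ Derive f x = alpha.
Proof.
  intro Halpha.
  assert (Hcont : continuity (Derive f)).
  { intro x; apply continuity_pt_filterlim, Hf. }
  destruct (IVT_gen (Derive f) (- a) a alpha Hcont) as [x [Hx Hfx]].
  - rewrite Ca_Derive_a, Ca_Derive_opp_a, Rmin_left, Rmax_right; lra.
  - rewrite Rmin_left, Rmax_right in Hx by lra.
    exists x; auto.
Qed.

Lemma xplus_spec (alpha : R) :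
  -1 <= alpha <= 1 -> -a <= xplus a f alpha <= a /\ Derive f (xplus a f alpha) = alpha.
Proof.
  intro Halpha; exact (epsilon_spec (inhabits 0) _ (Ca_Derive_surj alpha Halpha)).
Qed.

Lemma Ca_convex_le (x y t : R) :
  -a <= x <= a -> -a <= y <= a -> 0 < t < 1 ->
  f (t * x + (1 - t) * y) <= t * f x + (1 - t) * f y.
Proof.
  intros Hx Hy Ht; destruct Hf as [_ [_ [_ [_ Hconv]]]].
  destruct (Req_dec x y) as [<- | Hxy].
  - replace (t * x + (1 - t) * x) with x by ring; lra.
  - apply Rlt_le, Hconv; auto.
Qed.

Lemma Ca_tangent_lt (x z : R) :
  -a <= x <= a -> -a <= z <= a -> z <> x -> f x + Derive f x * (z - x) < f z.
Proof.
  intros Hx Hz Hzx.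
  set (m := (x + z) / 2).
  assert (Htan : f x + Derive f x * (m - x) <= f m).
  { apply convex_tangent_le; [apply Ca_is_derive |].
    intros t Ht; apply Ca_convex_le; unfold m; lra. }
  assert (Hmid : f m < 1 / 2 * f x + (1 - 1 / 2) * f z).
  { destruct Hf as [_ [_ [_ [_ Hconv]]]].
    replace m with (1 / 2 * x + (1 - 1 / 2) * z) by (unfold m; field).
    apply Hconv; auto; lra. }
  replace (m - x) with ((z - x) / 2) in Htan by (unfold m; field).
  lra.
Qed.

Lemma Ca_Falpha_ge_a (alpha z : R) : a <= z -> Falpha f alpha z = (1 - alpha) * z.
Proof. intro Hz; unfold Falpha; rewrite Ca_eq_id by exact Hz; ring. Qed.

Section Alpha.

Variable alpha : R.
Hypothesis Halpha : 0 <= alpha < 1.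

Local Notation xp := (xplus a f alpha).

Lemma xplus_lt_a : xp < a.
Proof.
  destruct (xplus_spec alpha ltac:(lra)) as [Hx Hdx].
  destruct (Req_dec xp a) as [Heq | Hne]; [| lra].
  rewrite Heq, Ca_Derive_a in Hdx; lra.
Qed.

Lemma Falpha_xplus_lt (z : R) : xp < z -> Falpha f alpha xp < Falpha f alpha z.
Proof.
  intro Hz.
  destruct (xplus_spec alpha ltac:(lra)) as [Hx Hdx].
  assert (Htan : forall y, xp < y <= a -> Falpha f alpha xp < Falpha f alpha y).
  { intros y Hy.
    pose proof (Ca_tangent_lt xp y Hx ltac:(lra) ltac:(lra)) as Hlt.
    rewrite Hdx in Hlt; unfold Falpha; lra. }
  destruct (Rle_lt_dec z a) as [Hza | Haz]; [apply Htan; lra |].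
  pose proof (Htan a (conj xplus_lt_a (Rle_refl a))) as Hxa.
  rewrite (Ca_Falpha_ge_a alpha a) in Hxa by lra.
  rewrite (Ca_Falpha_ge_a alpha z) by lra.
  nra.
Qed.

Lemma phi_xplus : phi a f alpha xp = xp.
Proof.
  unfold phi, Finv.
  destruct (epsilon_spec (inhabits 0)
              (fun z => xp <= z /\ Falpha f alpha z = Falpha f alpha xp)
              (ex_intro _ xp (conj (Rle_refl xp) eq_refl))) as [Hle Heq].
  set (w := epsilon _ _) in *.
  destruct (Req_dec w xp) as [Hw | Hw]; [exact Hw |].
  pose proof (Falpha_xplus_lt w ltac:(lra)); lra.
Qed.

Lemma salpha_eq : salpha a f alpha = / (1 - alpha) * Falpha f alpha xp.
Proof. unfold salpha, delta; rewrite phi_xplus; ring. Qed.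

Lemma Falpha_xplus_lt_a : Falpha f alpha xp < (1 - alpha) * a.
Proof. rewrite <- (Ca_Falpha_ge_a alpha a (Rle_refl a)); apply Falpha_xplus_lt, xplus_lt_a. Qed.

End Alpha.

End ClassCa.

Theorem corollary3p15 (a alpha : R) (f : R -> R) :
  0 < a -> 0 <= alpha < 1 -> in_Ca a f ->
  salpha a f alpha = / (1 - alpha) * Falpha f alpha (xplus a f alpha) /\
  salpha a f alpha < a.
Proof.
  intros Ha Halpha Hf.
  pose proof (salpha_eq a f Ha Hf alpha Halpha) as Hs.
  split; [exact Hs |].
  rewrite Hs.
  apply (Rmult_lt_reg_l (1 - alpha)); [lra |].
  rewrite <- Rmult_assoc, Rinv_r, Rmult_1_l by lra.
  exact (Falpha_xplus_lt_a a f Ha Hf alpha Halpha).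
Qed.
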